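(* Assume $q\equiv1\pmod 4$. Then $S^{(3)}(\beta)=0$ if and only if \[ \begin{cases} K(\chi)+\zeta_4K(\eta_{1/4}\chi)-K(\eta_{1/2}\chi)-\zeta_4K(\eta_{3/4}\chi)\equiv0 \pmod{8\mathcal{P}\,\mathbb{Z}[\zeta_{4k}]} & \text{if } q\equiv1\pmod 8,\\ K(\chi)-\zeta_4K(\eta_{1/4}\chi)-K(\eta_{1/2}\chi)+\zeta_4K(\eta_{3/4}\chi)\equiv0 \pmod{8\mathcal{P}\,\mathbb{Z}[\zeta_{4k}]} & \text{if } q\equiv5\pmod 8. \end{cases} \]
   Context: Let $p$ be an odd prime, $m\ge1$, $q=p^m$, $\alpha$ a primitive element of $\mathbb{F}_q$, and $T=q-1$. The binary SLCE sequence $(s_n)_{n\ge0}$ is defined as follows: $s_n=1$ if $\alpha^n+1$ is a nonzero non-square of $\mathbb{F}_q$, and $s_n=0$ otherwise. Put $S(X)=\sum_{n=0}^{T-1}s_nX^n\in\mathbb{F}_2[X]$. For an integer $t\ge0$, the $t$-th Hasse derivative is $S^{(t)}(X)=\sum_{n=t}^{T-1}\binom{n}{t}s_nX^{n-t}$, with coefficients reduced mod $2$. Let $\beta$ be an element of an algebraic closure of $\mathbb{F}_2$ with $\beta^T=1$ and multiplicative order $k>1$ (so $k$ is odd). Let $f$ be the order of $2$ modulo $k$, and write $\zeta_N=e^{2\pi i/N}$. Let $\mathcal{P}$ be a prime ideal of $\mathbb{Z}[\zeta_k]$ containing $2$. Fix a field isomorphism $\phi:\mathbb{F}_2(\beta)=\mathbb{F}_{2^f}\to\mathbb{Z}[\zeta_k]/\mathcal{P}$,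 and let $\zeta$ be the unique complex $k$-th root of unity with $\phi(\beta)=\zeta+\mathcal{P}$. Multiplicative characters of $\mathbb{F}_q$ are homomorphisms $\mathbb{F}_q^*\to\mathbb{C}^*$, extended by value $0$ at $0$. For a rational $j$ with $(q-1)j\in\mathbb{Z}$, $\eta_j$ is the character with $\eta_j(\alpha)=e^{2\pi ij}$. Let $\rho=\eta_{1/2}$ be the quadratic character. Let $\chi$ be the character with $\chi(\alpha^n)=\zeta^n$. For a character $\psi$, set $K(\psi)=\sum_{x\in\mathbb{F}_q}\rho(x)\psi(1-x)$. For an ideal $I$ of $\mathbb{Z}[\zeta_k]$, $I\,\mathbb{Z}[\zeta_{4k}]$ is the ideal it generates in $\mathbb{Z}[\zeta_{4k}]$. *)

From HB Require Import structures.
From mathcomp Require Import all_boot all_order all_algebra all_field.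
Set Implicit Arguments. Unset Strict Implicit. Unset Printing Implicit Defensive.
Import Order.TTheory GRing.Theory Num.Theory.
Local Open Scope ring_scope.

(* zetaN N = e^{2 pi i / N} in algC  (N >= 1):  N.-root (-1) is the N-th root
   of -1 of minimal nonnegative argument, i.e. e^{i pi / N}; its square is
   e^{2 pi i / N}. *)
Definition zetaN (N : nat) : algC := (N.-root (-1)) ^+ 2.

Definition Zcyc (N : nat) (x : algC) : Prop :=
  exists p : {poly int}, x = (map_poly (fun z : int => z%:~R) p).[zetaN N].

Definition prime_ideal_Zcyc (N : nat) (P : algC -> Prop) : Prop :=
  (forall x, P x -> Zcyc N x) /\
  [/\ P 0,
      (forall x y, P x -> P y -> P (x + y)),
      (forall a x, Zcyc N a -> P x -> P (a * x)),
      ~ P 1 &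
      (forall a b, Zcyc N a -> Zcyc N b -> P (a * b) -> P a \/ P b)].

Definition ext_ideal (N : nat) (I : algC -> Prop) (x : algC) : Prop :=
  exists r : seq (algC * algC),
    (forall ab, ab \in r -> Zcyc N ab.1 /\ I ab.2) /\
    x = \sum_(ab <- r) ab.1 * ab.2.

Definition scale_ideal (c : algC) (P : algC -> Prop) (y : algC) : Prop :=
  exists p, P p /\ y = c * p.

Definition dlog (F : finFieldType) (a x : F) : nat :=
  odflt 0%N (omap val [pick n : 'I_(#|F|.-1) | a ^+ n == x]).

Definition mulchar (F : finFieldType) (a : F) (c : algC) (x : F) : algC :=
  if x == 0 then 0 else c ^+ dlog a x.

(* eta_{j} for j = n/d : the character with eta(a) = e^{2 pi i n/d} *)
Definition etaQ (F : finFieldType) (a : F) (n d : nat) : F -> algC :=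
  mulchar a (zetaN d ^+ n).

Definition rho (F : finFieldType) (a : F) : F -> algC := etaQ a 1 2.

Definition charmul (F : finFieldType) (f g : F -> algC) : F -> algC :=
  fun x => f x * g x.

Definition Ksum (F : finFieldType) (a : F) (psi : F -> algC) : algC :=
  \sum_(x : F) rho a x * psi (1 - x).

Definition nonsq (F : finFieldType) (x : F) : bool :=
  (x != 0) && ~~ [exists y : F, y ^+ 2 == x].

Definition slce (F : finFieldType) (a : F) (n : nat) : bool := nonsq (a ^+ n + 1).

(* S(X) = sum_{n<T} s_n X^n, with coefficients (in F_2) embedded in a field L
   of characteristic 2 *)
Definition Spoly (F : finFieldType) (a : F) (L : fieldType) : {poly L} :=
  \poly_(n < #|F|.-1) ((slce a n)%:R : L).

From HB Require Import structures.
From mathcomp Require Import all_boot all_order all_algebra all_field.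
From mathcomp Require Import ring lra zify.
Import Order.TTheory GRing.Theory Num.Theory.
Local Open Scope ring_scope.
Set Implicit Arguments. Unset Strict Implicit. Unset Printing Implicit Defensive.

(* In characteristic 2, Lucas' theorem gives ['C(n, 3) = [n = 3 mod 4]], so
   [beta ^+ 3 * S'''(beta)] is [sum_(n = 3 mod 4) s_n beta ^+ n], the image under
   [psi] of [A := sum_(n = 3 mod 4) s_n zeta ^+ n]; hence [S'''(beta) = 0] iff
   [A \in P].  Substituting [x = 1 + alpha ^+ n] in [K (eta_(j/4) chi)]
   expresses it through the generating function of [s] twisted by [zeta_4 ^+ j];
   the combination in the statement averages over the characters of [Z/4Z],
   which isolates [n = 3 mod 4], and equals [- 8 A] (the sign
   [(-1) ^+ ((q - 1) / 4)] distinguishes [q = 1] from [q = 5 mod 8]).  Finally,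
   for odd [k], [Z[zeta_4k] = Z[zeta_k] + i Z[zeta_k]], and primality of [P]
   gives [8 A \in 8 P Z[zeta_4k]] iff [A \in P]. *)

Section UnitVectors.
Variable R : realFieldType.
Implicit Types ar ai br bi : R.

Lemma unit_cross_gt0_ltr ar ai br bi :
  ar ^+ 2 + ai ^+ 2 = 1 -> br ^+ 2 + bi ^+ 2 = 1 -> 0 <= ai -> 0 <= bi ->
  0 < ai * br - ar * bi -> ar < br.
Proof.
move=> ha hb ai_ge0 bi_ge0 cross_gt0; rewrite ltNge; apply/negP => le_br_ar.
have [br_ge0|br_lt0] := lerP 0 br.
  have le_ai_bi : ai <= bi by rewrite -ler_sqr ?nnegrE //; nra.
  nra.
have [ar_ge0|ar_lt0] := lerP 0 ar; first nra.
have le_bi_ai : bi <= ai by rewrite -ler_sqr ?nnegrE //; nra.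
nra.
Qed.

Lemma unit_ltr_cross_gt0 ar ai br bi :
  ar ^+ 2 + ai ^+ 2 = 1 -> br ^+ 2 + bi ^+ 2 = 1 -> 0 <= ai -> 0 < bi ->
  ar < br -> 0 < ai * br - ar * bi.
Proof.
move=> ha hb ai_ge0 bi_gt0 lt_ar_br.
have [br_ge0|br_lt0] := lerP 0 br.
  have [ar_ge0|ar_lt0] := lerP 0 ar; last nra.
  have le_bi_ai : bi <= ai by rewrite -ler_sqr ?nnegrE //; nra.
  nra.
have le_ai_bi : ai <= bi by rewrite -ler_sqr ?nnegrE //; nra.
nra.
Qed.

End UnitVectors.

Section UnitCircle.
Implicit Types a b : algC.

Local Definition reR v : algR := in_algR (Creal_Re v).
Local Definition imR v : algR := in_algR (Creal_Im v).

Lemma ReN1 : 'Re (-1 : algC) = -1.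
Proof. by apply/Creal_ReP; rewrite rpredN rpred1. Qed.

Lemma ImN1 : 'Im (-1 : algC) = 0.
Proof. by apply/Creal_ImP; rewrite rpredN rpred1. Qed.

Lemma unitC_Re_Im a : `|a| = 1 -> reR a ^+ 2 + imR a ^+ 2 = 1.
Proof. by move=> a1; apply: val_inj => /=; rewrite -normC2_Re_Im a1 expr1n. Qed.

Lemma Im_mul_conjC a b : 'Im (a * b^*) = 'Im a * 'Re b - 'Re a * 'Im b.
Proof. by rewrite ImM Re_conj Im_conj; ring. Qed.

Lemma unitC_Im_conjM_gt0_ltr a b : `|a| = 1 -> `|b| = 1 ->
  0 <= 'Im a -> 0 <= 'Im b -> 0 < 'Im (a * b^*) -> 'Re a < 'Re b.
Proof.
move=> a1 b1 Ia Ib; rewrite Im_mul_conjC.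
exact: (@unit_cross_gt0_ltr _ (reR a) (imR a) (reR b) (imR b)
          (unitC_Re_Im a1) (unitC_Re_Im b1)).
Qed.

Lemma unitC_ltr_Im_conjM_gt0 a b : `|a| = 1 -> `|b| = 1 ->
  0 <= 'Im a -> 0 < 'Im b -> 'Re a < 'Re b -> 0 < 'Im (a * b^*).
Proof.
move=> a1 b1 Ia Ib; rewrite Im_mul_conjC.
exact: (@unit_ltr_cross_gt0 _ (reR a) (imR a) (reR b) (imR b)
          (unitC_Re_Im a1) (unitC_Re_Im b1)).
Qed.

Lemma unitC_Re_inj a b : `|a| = 1 -> `|b| = 1 -> 0 <= 'Im a -> 0 <= 'Im b ->
  'Re a = 'Re b -> a = b.
Proof.
move=> a1 b1 Ia Ib eq_Re; apply/eqCP; split => //.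
have ha := unitC_Re_Im a1; have hb := unitC_Re_Im b1.
have eq_reR : reR a = reR b by apply: val_inj.
have Ia' : 0 <= imR a := Ia; have Ib' : 0 <= imR b := Ib.
suff : imR a = imR b by move/(congr1 val).
apply/eqP; rewrite -(eqrXn2 (isT : (0 < 2)%N)) //; apply/eqP.
by rewrite eq_reR in ha; lra.
Qed.

Lemma unitC_Re_leN1 a : `|a| = 1 -> 'Re a <= -1 -> a = -1.
Proof.
move=> a1 Ra; have ha := unitC_Re_Im a1; have Ra' : reR a <= -1 := Ra.
have Re_a : reR a = -1 by nra.
have Im_a : imR a = 0 by nra.
apply/eqCP; rewrite ReN1 ImN1.
by split; [exact: (congr1 val Re_a) | exact: (congr1 val Im_a)].
Qed.

Lemma norm_expN1 N (v : algC) : (0 < N)%N -> v ^+ N = -1 -> `|v| = 1.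
Proof.
move=> N_gt0 vN; apply/eqP; rewrite -(pexpr_eq1 N_gt0) ?normr_ge0 //.
by rewrite -normrX vN normrN1.
Qed.

End UnitCircle.

Lemma no_strict_ascent (I : finType) d (T : porderType d) (f : I -> T) (P : I -> Prop) :
  (forall i, P i -> exists2 j, P j & (f i < f j)%O) -> forall i, ~ P i.
Proof.
move=> up i; move: {2}#|_| (leqnn #|[set j | (f i < f j)%O]|) => n.
elim: n i => [|n IHn] i le_n Pi; have [j Pj lt_ij] := up i Pi.
  by move: le_n; rewrite leqn0 cards_eq0 => /eqP/setP/(_ j); rewrite !inE lt_ij.
apply: (IHn j _ Pj); rewrite -ltnS; apply: leq_trans le_n; apply: proper_card.
apply/properP; split; first by apply/subsetP => l; rewrite !inE; exact: lt_trans.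
by exists j; rewrite !inE ?ltxx.
Qed.

Lemma prim_root_Im_ge0 n : (0 < n)%N ->
  exists2 z : algC, n.-primitive_root z & 0 <= 'Im z.
Proof.
move=> n_gt0; have [z z_prim] := C_prim_root_exists n_gt0.
have [Iz|Iz] := boolP (0 <= 'Im z); first by exists z.
exists z^*; first by rewrite fmorph_primitive_root.
by rewrite Im_conj oppr_ge0; move: Iz; rewrite -real_ltNge ?Creal_Im ?rpred0 // => /ltW.
Qed.

Lemma prim_root_double_expN (R : idomainType) n (z : R) :
  (0 < n)%N -> (2 * n).-primitive_root z -> z ^+ n = -1.
Proof.
move=> n_gt0 z_prim.
have : (z ^+ n) ^+ 2 == 1 by rewrite -exprM mulnC (prim_expr_order z_prim).
rewrite sqrf_eq1 => /orP [|/eqP //].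
rewrite -(prim_order_dvd z_prim) => /(dvdn_leq n_gt0).
by rewrite leqNgt -[X in (X < _)%N]mul1n ltn_pmul2r.
Qed.

(* [y := N.-root (-1)] is the root of [X ^+ N + 1] of largest real part in the
   closed upper half plane.  Multiplying by [y^* ^+ 2] moves any other such root
   that is not a power of [y] strictly towards [1] without leaving the half
   plane, so by finiteness every such root, in particular a primitive [2N]-th
   root of unity, is a power of [y]. *)
Section RootOfMinusOne.
Variable N : nat.
Hypotheses (N_odd : odd N) (N_gt1 : (1 < N)%N).
Local Notation y := (N.-root (-1 : algC)).
Local Notation inY v := [exists j : 'I_(2 * N), v == y ^+ j].

Let N_gt0 : (0 < N)%N := ltnW N_gt1.
Let N2_gt0 : (0 < 2 * N)%N. Proof. by rewrite muln_gt0 N_gt0. Qed.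
Let y_expN : y ^+ N = -1 := rootCK N_gt0 (-1).
Let y_norm : `|y| = 1 := norm_expN1 N_gt0 y_expN.
Let Re_le_y v : v ^+ N = -1 -> 0 <= 'Im v -> 'Re v <= 'Re y.
Proof. by move=> vN Iv; apply: rootC_Re_max. Qed.

Lemma rootN1_neqN1 : y != -1.
Proof.
apply/eqP => y_N1.
have [z z_prim Iz] := prim_root_Im_ge0 N2_gt0.
have zN := prim_root_double_expN N_gt0 z_prim.
have := Re_le_y zN Iz; rewrite y_N1 ReN1 => /(unitC_Re_leN1 (norm_expN1 N_gt0 zN)) z_N1.
have := prim_order_dvd z_prim 2; rewrite z_N1 sqrrN expr1n eqxx.
move=> /(dvdn_leq (isT : (0 < 2)%N)).
by rewrite -[X in (_ <= X)%N]muln1 leq_pmul2l // leqNgt N_gt1.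
Qed.

(* Otherwise [- y ^+ 2], another root of [X ^+ N + 1] in the upper half plane,
   would lie to the right of [y]. *)
Lemma Re_rootN1_gt0 : 0 < 'Re y.
Proof.
rewrite real_ltNge ?Creal_Re ?rpred0 //; apply/negP => Ry_le0.
have uN : (- y ^+ 2) ^+ N = -1.
  by rewrite exprNn -signr_odd N_odd expr1 exprAC y_expN sqrrN expr1n mulN1r.
have Iu : 0 <= 'Im (- y ^+ 2).
  by rewrite raddfN /= ImM oppr_ge0 -mulr2n mulrn_wle0 // mulr_le0_ge0 // Im_rootC_ge0.
have := Re_le_y uN Iu; rewrite raddfN /= ReM => Ru_le.
have y_unit := unitC_Re_Im y_norm.
have Ry_le0' : reR y <= 0 := Ry_le0.
have Ru_le' : - (reR y * reR y - imR y * imR y) <= reR y := Ru_le.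
have : reR y <= -1 by nra.
by move/(unitC_Re_leN1 y_norm)/eqP; rewrite (negbTE rootN1_neqN1).
Qed.

Lemma Im_rootN1_gt0 : 0 < 'Im y.
Proof.
rewrite lt_def Im_rootC_ge0 // andbT; apply/eqP => Iy0.
have y_real : y = 'Re y by rewrite {1}[y]Crect Iy0 mulr0 addr0.
have : 0 < y ^+ N by rewrite exprn_gt0 // y_real Re_rootN1_gt0.
by rewrite y_expN oppr_gt0 ltr10.
Qed.

Let y_exp2N : y ^+ (2 * N) = 1.
Proof. by rewrite mulnC exprM y_expN sqrrN expr1n. Qed.

Lemma rootN1_ascent v : v ^+ N = -1 -> 0 <= 'Im v -> ~~ inY v ->
  exists2 w, [/\ w ^+ N = -1, 0 <= 'Im w & ~~ inY w] & 'Re v < 'Re w.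
Proof.
move=> vN Iv v_notin; have v_norm := norm_expN1 N_gt0 vN.
have yy : y * y^* = 1 by rewrite -normCK y_norm expr1n.
have Iy2 : 0 < 'Im (y ^+ 2).
  by rewrite ImM -mulr2n mulrn_wgt0 // mulr_gt0 ?Re_rootN1_gt0 ?Im_rootN1_gt0.
pose w := v * y^* ^+ 2.
have wN : w ^+ N = -1.
  by rewrite /w exprMn vN -exprM mulnC exprM -rmorphXn y_expN rmorphN1 sqrrN expr1n mulr1.
have w_norm := norm_expN1 N_gt0 wN.
have [Iw|Iw] := boolP (0 <= 'Im w).
  exists w; first split => //.
    apply: contra v_notin => /existsP [j /eqP w_yj]; apply/existsP.
    exists (Ordinal (ltn_pmod (j + 2) N2_gt0)).
    by rewrite /= expr_mod // exprD -w_yj /w -mulrA -exprMn [y^* * _]mulrC yy expr1n mulr1.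
  apply: unitC_Im_conjM_gt0_ltr => //.
  by rewrite /w rmorphM rmorphXn /= conjCK mulrA -normCK v_norm expr1n mul1r.
(* Below the real axis, [w^*] would be a root in the upper half plane to the
   right of [y]. *)
exfalso.
have wcN : w^* ^+ N = -1 by rewrite -rmorphXn wN rmorphN1.
have Iwc : 0 <= 'Im w^*.
  by move: Iw; rewrite Im_conj oppr_ge0 -real_ltNge ?Creal_Im ?rpred0 // => /ltW.
have := Re_le_y wcN Iwc; apply/negP; rewrite -real_ltNge ?Creal_Re //.
apply: unitC_Im_conjM_gt0_ltr; rewrite ?norm_conjC ?Im_rootC_ge0 //.
have -> : y * w^*^* = v * y^*.
  by rewrite conjCK /w expr2 mulrCA [y * (_ * _)]mulrA yy mul1r.
apply: unitC_ltr_Im_conjM_gt0; rewrite ?Im_rootN1_gt0 //.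
rewrite lt_def Re_le_y // andbT; apply: contra v_notin => /eqP Re_yv.
apply/existsP; exists (Ordinal (leq_trans N_gt1 (leq_pmull N (isT : (0 < 2)%N)))).
by rewrite /= expr1 (unitC_Re_inj v_norm y_norm Iv (Im_rootC_ge0 _ N_gt1) (esym Re_yv)).
Qed.

Lemma rootN1_prim : (2 * N).-primitive_root y.
Proof.
have [z z_prim Iz] := prim_root_Im_ge0 N2_gt0.
have /existsP [j /eqP z_yj] : inY z.
  apply: contraT => z_notin; exfalso.
  pose P (i : 'I_(2 * N)) := [/\ z ^+ i ^+ N = -1, 0 <= 'Im (z ^+ i) & ~~ inY (z ^+ i)].
  have z1 : (1 < 2 * N)%N by apply: leq_trans N_gt1 (leq_pmull N _).
  apply: (@no_strict_ascent _ _ _ (fun i : 'I_(2 * N) => 'Re (z ^+ i)) P _ (Ordinal z1)).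
    move=> i [iN Ii i_notin]; have [w [wN Iw w_notin] lt_w] := rootN1_ascent iN Ii i_notin.
    have w_exp2N : w ^+ (2 * N) = 1 by rewrite mulnC exprM wN sqrrN expr1n.
    have [l w_zl] := prim_rootP z_prim w_exp2N.
    by exists l; rewrite /P -?w_zl.
  by rewrite /P /= expr1; split => //; apply: prim_root_double_expN.
have [m y_prim m_dvd] := prim_order_exists N2_gt0 y_exp2N.
suff m_eq : m = (2 * N)%N by rewrite -m_eq.
apply/eqP; rewrite eqn_dvd m_dvd (prim_order_dvd z_prim) z_yj.
by rewrite exprAC (prim_expr_order y_prim) expr1n eqxx.
Qed.

End RootOfMinusOne.

Lemma zetaN_prim N : odd N -> (1 < N)%N -> N.-primitive_root (zetaN N).
Proof.
move=> N_odd N_gt1.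
have := dvdn_prim_root (rootN1_prim N_odd N_gt1) (dvdn_mull 2 (dvdnn N)).
by rewrite mulnK ?(ltnW N_gt1).
Qed.

Section CyclotomicIntegers.
Variable N : nat.

Lemma Zcyc_int (z : int) : Zcyc N z%:~R.
Proof. by exists z%:P; rewrite map_polyC hornerC. Qed.

Lemma Zcyc_nat n : Zcyc N n%:R.
Proof. by have := Zcyc_int n; rewrite pmulrn. Qed.

Lemma Zcyc0 : Zcyc N 0. Proof. exact: (Zcyc_nat 0). Qed.
Lemma Zcyc1 : Zcyc N 1. Proof. exact: (Zcyc_nat 1). Qed.
Lemma ZcycN1 : Zcyc N (-1). Proof. exact: (Zcyc_int (-1)). Qed.

Lemma ZcycD x y : Zcyc N x -> Zcyc N y -> Zcyc N (x + y).
Proof. by move=> [p ->] [q ->]; exists (p + q); rewrite rmorphD hornerD. Qed.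

Lemma ZcycM x y : Zcyc N x -> Zcyc N y -> Zcyc N (x * y).
Proof. by move=> [p ->] [q ->]; exists (p * q); rewrite rmorphM hornerM. Qed.

Lemma ZcycN x : Zcyc N x -> Zcyc N (- x).
Proof. by rewrite -mulN1r; apply: ZcycM ZcycN1. Qed.

Lemma ZcycX x n : Zcyc N x -> Zcyc N (x ^+ n).
Proof. by move=> Zx; elim: n => [|n IHn]; [exact: Zcyc1 | rewrite exprS; apply: ZcycM]. Qed.

Lemma Zcyc_sum (I : Type) (r : seq I) (P : pred I) (F : I -> algC) :
  (forall i, P i -> Zcyc N (F i)) -> Zcyc N (\sum_(i <- r | P i) F i).
Proof.
move=> ZF; apply: (big_rec (Zcyc N)); first exact: Zcyc0.
by move=> i x Pi Zx; apply: ZcycD => //; apply: ZF.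
Qed.

Lemma Zcyc_sum_natr_expr n (f : nat -> nat) x :
  Zcyc N x -> Zcyc N (\sum_(i < n) (f i)%:R * x ^+ i).
Proof. by move=> Zx; apply: Zcyc_sum => i _; apply: ZcycM; [apply: Zcyc_nat | apply: ZcycX]. Qed.

Lemma Zcyc_zetaN : Zcyc N (zetaN N).
Proof. by exists 'X; rewrite map_polyX hornerX. Qed.

End CyclotomicIntegers.

Lemma zetaN_expN N : (0 < N)%N -> zetaN N ^+ N = 1.
Proof. by move=> N_gt0; rewrite /zetaN exprAC rootCK // sqrrN expr1n. Qed.

Lemma zetaN_double_expN N : (0 < N)%N -> zetaN (2 * N) ^+ N = -1.
Proof. by move=> N_gt0; rewrite /zetaN -exprM rootCK // muln_gt0. Qed.

Lemma Zcyc_unity_root k x : odd k -> (1 < k)%N -> x ^+ k = 1 -> Zcyc k x.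
Proof.
move=> k_odd k_gt1 xk; have [i ->] := prim_rootP (zetaN_prim k_odd k_gt1) xk.
exact/ZcycX/Zcyc_zetaN.
Qed.

(* The square root [i] of [-1] in [Z[zeta_4k]]; for odd [k],
   [Z[zeta_4k] = Z[zeta_k] + i Z[zeta_k]]. *)
Definition icyc k : algC := zetaN (4 * k) ^+ k.

Lemma icyc_sqr k : (0 < k)%N -> icyc k ^+ 2 = -1.
Proof.
move=> k_gt0; rewrite /icyc -exprM [(k * 2)%N]mulnC.
by have := @zetaN_double_expN (2 * k); rewrite mulnA; apply; rewrite muln_gt0 k_gt0.
Qed.

Section OddLevel.
Variable k : nat.
Hypotheses (k_odd : odd k) (k_gt1 : (1 < k)%N).
Let k_gt0 : (0 < k)%N := ltnW k_gt1.

(* For [k = 2a + 1] and [t = 3a^2 + 3a + 1], [k + 2ka + 4t = 4k^2 + 1]; as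
   [-1 = zeta_4k ^+ 2k], this gives [zeta_4k = icyc k * (-1) ^+ a * (zeta_4k ^+ 4) ^+ t],
   and [zeta_4k ^+ 4] is a [k]-th root of unity. *)
Lemma zeta4k_split : exists2 d, Zcyc k d & zetaN (4 * k) = icyc k * d.
Proof.
pose w := zetaN (4 * k); pose a := k./2.
have k_eq : k = (a.*2).+1 by rewrite -[LHS]odd_double_half k_odd.
pose t := (3 * a * a + 3 * a + 1)%N.
exists ((-1) ^+ a * (w ^+ 4) ^+ t).
  apply: ZcycM; first exact/ZcycX/ZcycN1.
  by apply/ZcycX/Zcyc_unity_root => //; rewrite -exprM zetaN_expN // muln_gt0.
have w_exp4k : w ^+ (4 * k) = 1 by rewrite zetaN_expN // muln_gt0.
have N1_w : (-1 : algC) = w ^+ (k * 2) by rewrite exprM; exact/esym/icyc_sqr.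
rewrite /icyc -/w N1_w; clearbody w; rewrite -!exprM -!exprD.
have -> : (k + (k * 2 * a + 4 * t) = 4 * k * k + 1)%N.
  by rewrite /t k_eq -muln2 -addn1; ring.
by rewrite exprD exprM w_exp4k expr1n mul1r expr1.
Qed.

Lemma Zcyc4_split x : Zcyc (4 * k) x ->
  exists b c, [/\ Zcyc k b, Zcyc k c & x = b + icyc k * c].
Proof.
move=> [p ->]; have [d Zd w_eq] := zeta4k_split.
elim/poly_ind: p => [|p c [b [c' [Zb Zc' p_eq]]]].
  by exists 0, 0; split; [exact: Zcyc0 | exact: Zcyc0 | rewrite rmorph0 horner0 mulr0 addr0].
exists (c%:~R - c' * d), (b * d); split.
- by apply: ZcycD; [exact: Zcyc_int | apply/ZcycN/ZcycM].
- exact: ZcycM.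
rewrite rmorphD rmorphM /= map_polyX map_polyC hornerD hornerMX hornerC /= p_eq w_eq.
have i2 := icyc_sqr k_gt0.
have -> : (b + icyc k * c') * (icyc k * d) = b * d * icyc k + c' * d * icyc k ^+ 2 by ring.
by rewrite i2; ring.
Qed.

Variable P : algC -> Prop.
Hypothesis P_prime : prime_ideal_Zcyc k P.

(* Writing [c A = c (B + i C)] with [B, C] in [P] gives [(A - B) ^+ 2 = - C ^+ 2]
   in [P], and primality puts [A - B], hence [A], in [P]. *)
Lemma ext_ideal_scale_contract c A : c != 0 -> Zcyc k A ->
  ext_ideal (4 * k) (scale_ideal c P) (c * A) -> P A.
Proof.
move: P_prime => [PZ [P0 PD PM _ P_mul]] c_neq0 ZA [r [r_in cA_eq]].
have [B [C [PB PC r_sum]]] : exists B C, [/\ P B, P C &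
    \sum_(ab <- r) ab.1 * ab.2 = c * (B + icyc k * C)].
  elim: r r_in {cA_eq} => [|ab s IHs] r_in.
    by exists 0, 0; split => //; rewrite big_nil; ring.
  have [Zab1 [p [Pp ab2_eq]]] := r_in ab (mem_head _ _).
  have [b [c' [Zb Zc' ab1_eq]]] := Zcyc4_split Zab1.
  have [|B [C [PB PC s_sum]]] := IHs.
    by move=> x x_s; apply: r_in; rewrite inE x_s orbT.
  exists (b * p + B), (c' * p + C); split; try by apply: PD => //; apply: PM.
  by rewrite big_cons s_sum ab2_eq ab1_eq; ring.
have A_eq : A = B + icyc k * C by apply: (mulfI c_neq0); rewrite cA_eq r_sum.
have ZAB : Zcyc k (A - B) by apply: ZcycD => //; apply/ZcycN/PZ.
have PAB2 : P ((A - B) * (A - B)).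
  have -> : (A - B) * (A - B) = (- C) * C.
    by rewrite A_eq -[- C]mulN1r -(icyc_sqr k_gt0); ring.
  by apply: PM => //; apply/ZcycN/PZ.
have PAB : P (A - B) by case: (P_mul _ _ ZAB ZAB PAB2).
by rewrite -(subrK B A); apply: PD.
Qed.

Lemma ext_ideal_scaleE c A : c != 0 -> Zcyc k A ->
  ext_ideal (4 * k) (scale_ideal c P) (c * A) <-> P A.
Proof.
move=> c_neq0 ZA; split; first exact: ext_ideal_scale_contract.
move=> PA; exists [:: (1, c * A)]; split; last by rewrite big_seq1 mul1r.
by move=> ab; rewrite inE => /eqP -> /=; split; [apply: Zcyc1 | exists A].
Qed.

End OddLevel.

Lemma sum_expr_unity_root (R : idomainType) n (c : R) :
  c ^+ n = 1 -> c != 1 -> \sum_(i < n) c ^+ i = 0.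
Proof.
move=> cn c_neq1; have := subrX1 c n; rewrite cn subrr => /esym/eqP.
by rewrite mulf_eq0 subr_eq0 (negbTE c_neq1) => /eqP.
Qed.

Lemma mulchar0 (F : finFieldType) (a : F) c : mulchar a c 0 = 0.
Proof. by rewrite /mulchar eqxx. Qed.

Lemma charmul_mulchar (F : finFieldType) (a : F) c d :
  charmul (mulchar a c) (mulchar a d) =1 mulchar a (c * d).
Proof. by move=> x; rewrite /charmul /mulchar; case: (x == 0); rewrite ?mulr0 // exprMn. Qed.

Definition slce3 (F : finFieldType) (a : F) (n : nat) : nat := (n %% 4 == 3)%N && slce a n.

Definition slce_sum3 (F : finFieldType) (a : F) (R : pzSemiRingType) (x : R) : R :=
  \sum_(i < #|F|.-1) (slce3 a i)%:R * x ^+ i.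

Lemma zetaN2 : zetaN 2 = -1.
Proof. by have := @zetaN_double_expN 1 isT; rewrite expr1. Qed.

Section PrimitiveElement.
Variables (F : finFieldType) (a : F).
Local Notation T := #|F|.-1.
Hypotheses (a_prim : T.-primitive_root a) (T_even : ~~ odd T).

Let T_gt0 : (0 < T)%N := prim_order_gt0 a_prim.

Lemma prim_expr_neq0 n : a ^+ n != 0.
Proof. by rewrite expf_neq0 // (prim_root_eq0 a_prim) -lt0n T_gt0. Qed.

Lemma prim_log (x : F) : x != 0 -> {i : 'I_T | x = a ^+ i}.
Proof.
move=> x_neq0; apply: (prim_rootP a_prim).
have card_F : #|F| = T.+1 by rewrite prednK //; apply/card_gt0P; exists 0.
have := expf_card x; rewrite card_F exprS.
by move/eqP; rewrite -[X in _ == X]mulr1 (inj_eq (mulfI x_neq0)) => /eqP.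
Qed.

Lemma dlog_expr n : dlog a (a ^+ n) = (n %% T)%N.
Proof.
rewrite /dlog; case: pickP => [i /eqP | no_i] /=.
  by move/eqP; rewrite (eq_prim_root_expr a_prim) modn_small // => /eqP.
have := no_i (Ordinal (ltn_pmod n T_gt0)).
by rewrite /= (prim_expr_mod a_prim) eqxx.
Qed.

Lemma mulchar_expr c n : c ^+ T = 1 -> mulchar a c (a ^+ n) = c ^+ n.
Proof. by move=> cT; rewrite /mulchar (negbTE (prim_expr_neq0 n)) dlog_expr expr_mod. Qed.

Lemma mulcharM c x y : c ^+ T = 1 ->
  mulchar a c (x * y) = mulchar a c x * mulchar a c y.
Proof.
move=> cT; have [->|x_neq0] := eqVneq x 0; first by rewrite mul0r !mulchar0 mul0r.
have [->|y_neq0] := eqVneq y 0; first by rewrite mulr0 !mulchar0 mulr0.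
have [i ->] := prim_log x_neq0; have [j ->] := prim_log y_neq0.
by rewrite -exprD !mulchar_expr // exprD.
Qed.

Lemma sum_prim_powers (V : nmodType) (f : F -> V) :
  \sum_(x : F) f x = f 0 + \sum_(i < T) f (a ^+ i).
Proof.
rewrite (bigD1 0) //=; congr (_ + _).
have inj_exp : {in [pred i : 'I_T | true] &, injective (fun i : 'I_T => a ^+ i)}.
  move=> i j _ _ /eqP; rewrite (eq_prim_root_expr a_prim) !modn_small //.
  by move/eqP/val_inj.
rewrite -(big_imset f inj_exp) /=; apply: eq_bigl => x; apply/idP/idP.
  by move=> x_neq0; have [i ->] := prim_log x_neq0; apply/imsetP; exists i.
by case/imsetP => i _ ->; apply: prim_expr_neq0.
Qed.

Let T_double : T./2.*2 = T.
Proof. by rewrite -[RHS]odd_double_half (negbTE T_even). Qed.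

Lemma half_prim_order_gt0 : (0 < T./2)%N.
Proof. by have := T_double; have := T_gt0; lia. Qed.

Lemma half_prim_order_lt : (T./2 < T)%N.
Proof. by have := T_double; have := T_gt0; lia. Qed.

Lemma prim_expr_half : a ^+ T./2 = -1.
Proof.
have : (a ^+ T./2) ^+ 2 == 1 by rewrite -exprM muln2 T_double (prim_expr_order a_prim).
rewrite sqrf_eq1 => /orP [|/eqP //].
rewrite -(prim_order_dvd a_prim) => /(dvdn_leq half_prim_order_gt0).
by rewrite leqNgt half_prim_order_lt.
Qed.

Lemma oneD_prim_expr_eq0 (i : 'I_T) : (1 + a ^+ i == 0) = (val i == T./2).
Proof.
rewrite addrC addr_eq0 -prim_expr_half (eq_prim_root_expr a_prim) !modn_small //.
exact: half_prim_order_lt.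
Qed.

Lemma is_square_prim_expr i : [exists y : F, y ^+ 2 == a ^+ i] = ~~ odd i.
Proof.
apply/existsP/idP => [[y /eqP y2_eq]|i_even]; last first.
  by exists (a ^+ i./2); rewrite -exprM muln2 -{2}(odd_double_half i) (negbTE i_even).
have y_neq0 : y != 0.
  by apply: contra_eqN y2_eq => /eqP ->; rewrite expr0n eq_sym prim_expr_neq0.
have [j y_eq] := prim_log y_neq0; rewrite y_eq -exprM in y2_eq.
move/eqP: y2_eq; rewrite (eq_prim_root_expr a_prim) => /eqP /(congr1 (modn^~ 2)).
have T2 : (2 %| T)%N by rewrite dvdn2.
by rewrite /= !(modn_dvdm _ T2) !modn2 oddM andbF; case: (odd i).
Qed.

Lemma signr_prim_order : (-1 : algC) ^+ T = 1.
Proof. by rewrite -signr_odd (negbTE T_even). Qed.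

Lemma rhoE x : rho a x = 1 - 2 * (nonsq x)%:R - (x == 0)%:R.
Proof.
rewrite /rho /etaQ zetaN2 expr1.
have [->|x_neq0] := eqVneq x 0; first by rewrite mulchar0 /nonsq eqxx /=; ring.
have [i ->] := prim_log x_neq0.
rewrite mulchar_expr ?signr_prim_order // /nonsq prim_expr_neq0 is_square_prim_expr negbK /=.
by rewrite -signr_odd; case: (odd i) => /=; ring.
Qed.

(* Substituting [x = 1 + y] and then [y = a ^+ i], the quadratic character
   [rho (1 + a ^+ i)] is read off the SLCE sequence. *)
Lemma Ksum_mulchar c : c ^+ T = 1 ->
  Ksum a (mulchar a c) = c ^+ T./2 * (\sum_(i < T) c ^+ i
     - 2 * \sum_(i < T) (slce a i)%:R * c ^+ i - c ^+ T./2).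
Proof.
move=> cT; rewrite /Ksum (reindex_inj (addrI 1)) /=.
transitivity (\sum_y mulchar a c (-1) * (rho a (1 + y) * mulchar a c y)).
  apply: eq_bigr => y _; rewrite (_ : 1 - (1 + y) = -1 * y); last by ring.
  by rewrite mulcharM //; ring.
rewrite -mulr_sumr sum_prim_powers -prim_expr_half mulchar_expr // mulchar0 mulr0 add0r.
congr (_ * _).
transitivity (\sum_(i < T) (c ^+ i - 2 * ((slce a i)%:R * c ^+ i)
    - (val i == T./2)%:R * c ^+ i)).
  apply: eq_bigr => i _; rewrite mulchar_expr // rhoE oneD_prim_expr_eq0.
  by rewrite /slce [a ^+ i + 1]addrC; ring.
rewrite !sumrB -mulr_sumr; congr (_ - _ - _).
rewrite (bigD1 (Ordinal half_prim_order_lt)) //= eqxx mul1r big1 ?addr0 // => i i_neq.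
rewrite (_ : (val i == T./2) = false) ?mul0r //.
by apply: contraNF i_neq => /eqP i_eq; apply/eqP/val_inj.
Qed.

End PrimitiveElement.

Lemma zetaN4_sqr : zetaN 4 ^+ 2 = -1.
Proof. exact: (@zetaN_double_expN 2). Qed.

(* The four terms are [(w ^+ j) ^+ i.+1] for [j < 4]: orthogonality of the
   characters of [Z/4Z]. *)
Lemma sqrtN1_indicator3 (R : comNzRingType) (w : R) i : w ^+ 2 = -1 ->
  1 + w * w ^+ i - (-1) ^+ i - w * (w ^+ 3) ^+ i = 4 * ((i %% 4 == 3)%N)%:R.
Proof.
move=> w2; have w4 : w ^+ 4 = 1 by rewrite (exprM w 2 2) w2 sqrrN expr1n.
have w_mod n : w ^+ n = w ^+ (n %% 4) by rewrite expr_mod.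
have w3 : w ^+ 3 = - w by rewrite exprS w2 mulrN1.
rewrite -w2 -!exprM -!exprS (w_mod i.+1) (w_mod (2 * i)%N) (w_mod (3 * i).+1).
have -> : (i.+1 %% 4 = (i %% 4).+1 %% 4)%N by lia.
have -> : (2 * i %% 4 = 2 * (i %% 4) %% 4)%N by lia.
have -> : ((3 * i).+1 %% 4 = (3 * (i %% 4)).+1 %% 4)%N by lia.
have : (i %% 4 < 4)%N by rewrite ltn_mod.
by case: (i %% 4)%N => [|[|[|[|n]]]] //= _; rewrite ?expr0 ?expr1 ?w2 ?w3; ring.
Qed.

Lemma signr_quarter n : (n %% 4 = 1)%N ->
  (-1 : algC) ^+ (n.-1 %/ 4) = if (n %% 8 == 1)%N then 1 else -1.
Proof.
move=> n4; rewrite -signr_odd -modn2.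
by case: ifP => /eqP n8; [have -> : (n.-1 %/ 4 %% 2 = 0)%N by lia
                         | have -> : (n.-1 %/ 4 %% 2 = 1)%N by lia].
Qed.

Section TwistedSums.
Variables (F : finFieldType) (a : F) (zeta : algC).
Local Notation T := #|F|.-1.
Local Notation w := (zetaN 4).
Hypotheses (a_prim : T.-primitive_root a) (T4 : (4 %| T)%N).
Hypotheses (zeta_half : zeta ^+ T./2 = 1)
           (zeta_twist_neq1 : forall u, u ^+ 4 = 1 -> u * zeta != 1).

Let T_even : ~~ odd T.
Proof. by rewrite -dvdn2 (dvdn_trans _ T4). Qed.

Let T_double : T./2.*2 = T.
Proof. by rewrite -[RHS]odd_double_half (negbTE T_even). Qed.

Let half_quarter : T./2 = (2 * (T %/ 4))%N.
Proof. by move: T4 T_double => /dvdnP [q ->]; rewrite mulnK //; lia. Qed.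

Let twisted_sum u := \sum_(i < T) (slce a i)%:R * (u * zeta) ^+ i.

Lemma Ksum_twist u : u ^+ 4 = 1 ->
  Ksum a (mulchar a (u * zeta)) = u ^+ T./2 * (- 2 * twisted_sum u - u ^+ T./2).
Proof.
move=> u4; have uzT : (u * zeta) ^+ T = 1.
  have uT : u ^+ T = 1 by move: T4 => /dvdnP [q ->]; rewrite mulnC exprM u4 expr1n.
  by rewrite exprMn uT -T_double -muln2 exprM zeta_half expr1n mulr1.
rewrite (Ksum_mulchar a_prim T_even uzT) (sum_expr_unity_root uzT (zeta_twist_neq1 u4)).
by rewrite exprMn zeta_half mulr1 /twisted_sum; ring.
Qed.

Lemma twisted_sum_combination :
  twisted_sum 1 + w * twisted_sum (w ^+ 1) - twisted_sum (-1) - w * twisted_sum (w ^+ 3)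
  = 4 * slce_sum3 a zeta.
Proof.
have indicator i := sqrtN1_indicator3 i zetaN4_sqr.
rewrite /twisted_sum /slce_sum3 /slce3; move: indicator.
move: (zetaN 4) (zetaN 4 ^+ 3) => v v3 indicator.
rewrite !mulr_sumr -big_split -!sumrB /=; apply: eq_bigr => i _.
rewrite ?expr1 !exprMn expr1n -mulnb natrM.
transitivity ((slce a i)%:R * zeta ^+ i * (1 + v * v ^+ i - (-1) ^+ i - v * v3 ^+ i)).
  by ring.
by rewrite (indicator i); ring.
Qed.

Lemma Ksum_combination :
  let K := Ksum a in let chi := mulchar a zeta in
  K chi + (-1) ^+ (T %/ 4) * w * K (charmul (etaQ a 1 4) chi) - K (charmul (etaQ a 1 2) chi)
    - (-1) ^+ (T %/ 4) * w * K (charmul (etaQ a 3 4) chi) = 8 * - slce_sum3 a zeta.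
Proof.
move=> K chi; rewrite {}/K {}/chi.
have K_twist u :
    Ksum a (charmul (mulchar a u) (mulchar a zeta)) = Ksum a (mulchar a (u * zeta)).
  by apply: eq_bigr => x _; rewrite charmul_mulchar.
have w4 : w ^+ 4 = 1 by rewrite zetaN_expN.
have w3_sqr : (w ^+ 3) ^+ 2 = -1 by rewrite -exprM mulnC exprM zetaN4_sqr -signr_odd.
have w3_4 : (w ^+ 3) ^+ 4 = 1 by rewrite exprAC w4 expr1n.
rewrite -{1}[zeta]mul1r /etaQ !K_twist zetaN2 !expr1 !Ksum_twist ?expr1n //;
  try by rewrite -signr_odd.
rewrite half_quarter !exprM zetaN4_sqr w3_sqr sqrrN !expr1n.
rewrite (_ : 8 * - _ = -2 * (4 * slce_sum3 a zeta)); last by ring.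
rewrite -twisted_sum_combination -signr_odd.
by case: (odd _); rewrite ?expr0 ?expr1; ring.
Qed.

End TwistedSums.

Lemma odd_bin2_bin3 n :
  odd 'C(n, 2) = (2 <= n %% 4)%N /\ odd 'C(n, 3) = (n %% 4 == 3)%N.
Proof.
elim: n => [|n [IH2 IH3]] //; rewrite !binS bin1 !oddD IH2 IH3.
have n4_lt : (n %% 4 < 4)%N by rewrite ltn_mod.
have -> : (n.+1 %% 4 = (n %% 4).+1 %% 4)%N by lia.
have -> : odd n = odd (n %% 4) by rewrite {1}(divn_eq n 4) oddD oddM andbF.
by case: (n %% 4)%N n4_lt => [|[|[|[|m]]]].
Qed.

Lemma horner_nderiv3_Spoly (F : finFieldType) (a : F) (L : fieldType) (beta : L) :
  2%N \in [pchar L] -> (nderivn 3 (Spoly a L)).[beta] * beta ^+ 3 = slce_sum3 a beta.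
Proof.
move=> L2; rewrite /Spoly poly_def raddf_sum horner_sum mulr_suml; apply: eq_bigr => i _.
rewrite /slce3 /= nderivnZ nderivnXn hornerZ hornerMn hornerXn.
have [i_lt3|i_ge3] := ltnP i 3.
  rewrite bin_small // mulr0n mulr0 mul0r.
  by rewrite modn_small ?(leq_trans i_lt3) // (ltn_eqF i_lt3) mul0r.
rewrite -[_ *+ 'C(i, 3)]mulr_natr -['C(i, 3)%:R](GRing.natr_mod_pchar L2) modn2.
rewrite (proj2 (odd_bin2_bin3 i)).
rewrite -mulnb natrM -[X in _ = _ * beta ^+ X](subnK i_ge3) exprD.
by ring.
Qed.

Lemma pchar2_prim_root_odd (L : fieldType) (beta : L) k :
  2%N \in [pchar L] -> k.-primitive_root beta -> odd k.
Proof.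
move=> L2 beta_prim; apply: contraT; rewrite -dvdn2 => k_even.
have z_prim := dvdn_prim_root beta_prim k_even.
set z := beta ^+ (k %/ 2) in z_prim.
have : (z - 1) ^+ 2 = 0.
  rewrite (_ : (z - 1) ^+ 2 = z ^+ 2 + 1 - 2%:R * z); last by rewrite -mulr_natl; ring.
  by rewrite (prim_expr_order z_prim) (pcharf0 L2) mul0r subr0 -(pcharf0 L2).
move/eqP; rewrite expf_eq0 /= subr_eq0 => /eqP z_eq1.
by have := prim_order_dvd z_prim 1; rewrite z_eq1 expr1n eqxx.
Qed.

Lemma odd_unity_root_exp4 (R : nzRingType) k (x : R) :
  odd k -> x ^+ k = 1 -> x ^+ 4 = 1 -> x = 1.
Proof.
move=> k_odd xk x4; pose a := k./2.
have k_eq : k = (a.*2).+1 by rewrite -[LHS]odd_double_half k_odd.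
have : x ^+ (k * k) = 1 by rewrite exprM xk expr1n.
have -> : (k * k = 4 * (a * a + a) + 1)%N by rewrite k_eq -muln2 -addn1; ring.
by rewrite exprD exprM x4 expr1n mul1r expr1.
Qed.

Lemma twist_unity_root_neq1 (R : comNzRingType) k (x : R) :
  odd k -> x ^+ k = 1 -> x != 1 -> forall u, u ^+ 4 = 1 -> u * x != 1.
Proof.
move=> k_odd xk x_neq1 u u4; apply: contra_neq x_neq1 => ux1.
apply: (odd_unity_root_exp4 k_odd xk).
by have := congr1 (fun z => z ^+ 4) ux1; rewrite exprMn u4 mul1r expr1n.
Qed.

Lemma unity_root_expr_half (R : nzRingType) k n (x : R) :
  odd k -> x ^+ k = 1 -> (k %| n)%N -> (2 %| n)%N -> x ^+ n./2 = 1.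
Proof.
move=> k_odd xk kn n_even.
have n_double : (n./2.*2 = n)%N by rewrite -[RHS]odd_double_half -[odd n]negbK -dvdn2 n_even.
have : (k %| n./2)%N.
  by rewrite -(Gauss_dvdr _ (_ : coprime k 2)) ?coprimen2 // ?mul2n ?muln2 n_double.
by move=> /dvdnP [q ->]; rewrite mulnC exprM xk expr1n.
Qed.

Lemma horner_nderiv3_Spoly_eq0 (F : finFieldType) (a : F) (L : fieldType) (beta : L) :
  2%N \in [pchar L] -> beta != 0 ->
  (nderivn 3 (Spoly a L)).[beta] = 0 <-> slce_sum3 a beta = 0.
Proof.
move=> L2 beta_neq0; rewrite -(horner_nderiv3_Spoly a beta L2).
split=> [->|/eqP]; first by rewrite mul0r.
by rewrite mulf_eq0 expf_eq0 (negbTE beta_neq0) andbF orbF => /eqP.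
Qed.

Lemma prime_ideal_oppE k P x : prime_ideal_Zcyc k P -> Zcyc k x -> P (- x) <-> P x.
Proof.
move=> [_ [_ _ PM _ _]] Zx.
have PN y : Zcyc k y -> P y -> P (- y).
  by move=> Zy Py; rewrite -mulN1r; apply: PM => //; apply: ZcycN1.
split=> [PNx|Px]; last exact: PN.
by rewrite -[x]opprK; apply: PN => //; apply: ZcycN.
Qed.

Section ReductionMap.
Variables (k : nat) (L : nzRingType) (psi : algC -> L) (zeta : algC) (beta : L).
Hypotheses (psiD : forall x y, Zcyc k x -> Zcyc k y -> psi (x + y) = psi x + psi y)
           (psiM : forall x y, Zcyc k x -> Zcyc k y -> psi (x * y) = psi x * psi y)
           (psi1 : psi 1 = 1) (Zzeta : Zcyc k zeta) (psi_zeta : psi zeta = beta).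

Lemma psi0 : psi 0 = 0.
Proof. by apply: (addrI (psi 0)); rewrite -psiD ?addr0 //; apply: Zcyc0. Qed.

Lemma psi_natr n : psi n%:R = n%:R.
Proof.
elim: n => [|n IHn]; first exact: psi0.
by rewrite !mulrS psiD ?psi1 ?IHn //; [apply: Zcyc1 | apply: Zcyc_nat].
Qed.

Lemma psi_expr n : psi (zeta ^+ n) = beta ^+ n.
Proof.
elim: n => [|n IHn]; first by rewrite !expr0.
by rewrite !exprS psiM ?IHn ?psi_zeta //; apply: ZcycX.
Qed.

Lemma psi_sum_natr_expr n (f : nat -> nat) :
  psi (\sum_(i < n) (f i)%:R * zeta ^+ i) = \sum_(i < n) (f i)%:R * beta ^+ i.
Proof.
elim: n => [|n IHn]; first by rewrite !big_ord0 psi0.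
have Zfn := Zcyc_nat k (f n); have Zzn := ZcycX n Zzeta.
rewrite !big_ord_recr /= psiD ?psiM ?psi_natr ?psi_expr ?IHn //.
  exact: Zcyc_sum_natr_expr.
exact: ZcycM.
Qed.

End ReductionMap.

Theorem mainTheorem5
  (p m : nat) (F : finFieldType) (alpha : F) (k : nat)
  (L : finFieldType) (beta : L) (P : algC -> Prop) (psi : algC -> L) (zeta : algC) :
  prime p -> odd p -> (0 < m)%N -> #|F| = (p ^ m)%N ->
  (#|F|.-1).-primitive_root alpha ->
  (#|F| %% 4 = 1)%N ->
  2%N \in [pchar L] ->
  beta ^+ (#|F|.-1) = 1 ->
  (1 < k)%N -> k.-primitive_root beta ->
  prime_ideal_Zcyc k P -> P 2 ->
  (forall x y, Zcyc k x -> Zcyc k y -> psi (x + y) = psi x + psi y) ->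
  (forall x y, Zcyc k x -> Zcyc k y -> psi (x * y) = psi x * psi y) ->
  psi 1 = 1 ->
  (forall l : L, exists x, Zcyc k x /\ psi x = l) ->
  (forall x, Zcyc k x -> (P x <-> psi x = 0)) ->
  zeta ^+ k = 1 -> psi zeta = beta ->
  let chi := mulchar alpha zeta in
  let K := Ksum alpha in
  let z4 := zetaN 4 in
  let I8P := ext_ideal (4 * k) (scale_ideal 8 P) in
  ((nderivn 3 (Spoly alpha L)).[beta] = 0 <->
   if (#|F| %% 8 == 1)%N then
     I8P (K chi + z4 * K (charmul (etaQ alpha 1 4) chi)
          - K (charmul (etaQ alpha 1 2) chi) - z4 * K (charmul (etaQ alpha 3 4) chi))
   else
     I8P (K chi - z4 * K (charmul (etaQ alpha 1 4) chi)
          - K (charmul (etaQ alpha 1 2) chi) + z4 * K (charmul (etaQ alpha 3 4) chi))).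
Proof.
move=> _ _ _ _ a_prim q4 L2 betaT k_gt1 beta_prim P_prime _ psiD psiM psi1 _ P_ker zk psi_zeta.
move=> chi K z4 I8P; rewrite {}/chi {}/K {}/z4 {}/I8P.
have k_odd := pchar2_prim_root_odd L2 beta_prim.
have T4 : (4 %| #|F|.-1)%N by have := prim_order_gt0 a_prim; lia.
have zeta_half : zeta ^+ (#|F|.-1)./2 = 1.
  apply: (unity_root_expr_half k_odd zk); last exact: dvdn_trans (isT : (2 %| 4)%N) T4.
  by rewrite (prim_order_dvd beta_prim) betaT.
have Zzeta := Zcyc_unity_root k_odd k_gt1 zk.
have zeta_neq1 : zeta != 1.
  apply: contraTneq k_gt1 => zeta1; have := prim_order_dvd beta_prim 1.
  by rewrite -psi_zeta zeta1 psi1 expr1n eqxx dvdn1 => /eqP ->.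
have ZA : Zcyc k (slce_sum3 alpha zeta) := Zcyc_sum_natr_expr _ (slce3 alpha) Zzeta.
have psiA : psi (slce_sum3 alpha zeta) = slce_sum3 alpha beta.
  exact: (psi_sum_natr_expr psiD psiM psi1 Zzeta psi_zeta _ (slce3 alpha)).
have beta_neq0 : beta != 0 by rewrite (prim_root_eq0 beta_prim) -lt0n ltnW.
have eight_neq0 : (8 : algC) != 0 by rewrite pnatr_eq0.
rewrite (horner_nderiv3_Spoly_eq0 _ L2 beta_neq0) -psiA -(P_ker _ ZA).
rewrite -(prime_ideal_oppE P_prime ZA).
rewrite -(ext_ideal_scaleE k_odd k_gt1 P_prime eight_neq0 (ZcycN ZA)).
have := Ksum_combination a_prim T4 zeta_half (twist_unity_root_neq1 k_odd zk zeta_neq1).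
rewrite /= signr_quarter //.
case: ifP => _ comb; [rewrite !mul1r in comb | rewrite !mulN1r !mulNr opprK in comb].
all: by rewrite -comb.
Qed.
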